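(* Let $\varphi:\mathbb R^d\to\mathbb R\cup\{+\infty\}$ be proper, convex, lsc and satisfy property (X) with some constant $D>0$. Let $C>0$ and $\alpha_0>0$. For $i=1,2$ let $\zeta_i\in W^{1,\infty}(0,\infty)^d$ solve $\alpha_i(t)\dot\zeta_i+\partial\varphi(\zeta_i)\ni g_i(t)$ a.e., $\zeta_i(0)=\zeta_{0i}$, with $\zeta_{0i}\in\mathcal D_C(\varphi)$, $\alpha_i\in L^\infty_{loc}(0,\infty)$, $\alpha_i\ge\alpha_0$ a.e., $g_i\in L^\infty(0,\infty)^d$, $|g_i(t)|\le C$ a.e. Then there exists a constant $L$ (depending on $C$ and $D$) such that for every $t\in(0,\infty)$ $$|\zeta_1-\zeta_2|(t)\le|\zeta_{01}-\zeta_{02}|+L\int_0^t\Big(\Big|\frac1{\alpha_1}-\frac1{\alpha_2}\Big|+|g_1-g_2|\Big)d\tau.$$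
   Context: $\mathcal D_C(\varphi)=\{\chi\in\mathrm{dom}\,\varphi:\exists\xi\in\partial\varphi(\chi),|\xi|\le C\}$. Property (X) with constant $D$: for every $C>0$, every $\zeta_0\in\mathcal D_C(\varphi)$, every $\alpha\in L^\infty_{loc}(0,\infty)$ with $\alpha\ge\alpha_0>0$ a.e. (some $\alpha_0$), and every $g\in L^\infty(0,\infty)^d$ with $|g|\le C$ a.e., the solution $\zeta\in W^{1,1}_{loc}(0,\infty)^d$ of $\alpha\zeta_t+\partial\varphi(\zeta)\ni g$ a.e., $\zeta(0)=\zeta_0$, satisfies $|g(t)-\alpha(t)\zeta_t(t)|\le DC$ a.e. *)

From HB Require Import structures.
From mathcomp Require Import all_boot all_order all_algebra.
From mathcomp Require Import all_classical all_reals all_analysis.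
Set Implicit Arguments. Unset Strict Implicit. Unset Printing Implicit Defensive.
Import Order.TTheory GRing.Theory Num.Theory.
Local Open Scope classical_set_scope.
Local Open Scope ring_scope.

Section Defs.
Variables (R : realType) (d : nat).
Notation vec := 'rV[R]_d.

Definition vdot (x y : vec) : R := \sum_(i < d) x ord0 i * y ord0 i.
Definition enorm (x : vec) : R := Num.sqrt (vdot x x).

Definition never_minfty (phi : vec -> \bar R) := forall x, phi x != -oo%E.
Definition proper_fun (phi : vec -> \bar R) :=
  never_minfty phi /\ exists x, (phi x < +oo)%E.
Definition convex_fun (phi : vec -> \bar R) :=
  forall (x y : vec) (l : R), 0 < l -> l < 1 ->
    (phi ((l *: x + (1 - l) *: y)%R) <= l%:E * phi x + (1 - l)%:E * phi y)%E.
Definition lsc_fun (phi : vec -> \bar R) :=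
  forall (x : vec) (c : R), (c%:E < phi x)%E ->
    exists2 delta : R, 0 < delta &
      forall y, enorm (y - x) < delta -> (c%:E < phi y)%E.

Definition dom (phi : vec -> \bar R) : set vec := [set x | (phi x < +oo)%E].

Definition subdiff (phi : vec -> \bar R) (chi xi : vec) : Prop :=
  (phi chi < +oo)%E /\
  forall y, ((fine (phi chi) + vdot xi (y - chi))%:E <= phi y)%E.

Definition DC (phi : vec -> \bar R) (C : R) : set vec :=
  [set chi | dom phi chi /\ exists xi, subdiff phi chi xi /\ enorm xi <= C].

(* zeta is a W^{1,1}_loc(0,oo)^d function with (weak) derivative zeta' :
   zeta' is locally integrable on [0,oo) and zeta is its primitive. *)
Definition W11loc (zeta zeta' : R -> vec) : Prop :=
  forall i : 'I_d,
    (forall T : R, 0 < T ->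
       lebesgue_measure.-integrable `[0, T] (fun s => (zeta' s ord0 i)%:E)) /\
    (forall t : R, 0 <= t ->
       zeta t ord0 i = zeta 0 ord0 i + Rintegral lebesgue_measure `[0, t] (fun s => zeta' s ord0 i)).

Definition is_solution (phi : vec -> \bar R) (alpha : R -> R) (g : R -> vec)
    (zeta0 : vec) (zeta zeta' : R -> vec) : Prop :=
  [/\ W11loc zeta zeta', zeta 0 = zeta0 &
      {ae lebesgue_measure, forall t, 0 < t ->
         subdiff phi (zeta t) (g t - alpha t *: zeta' t)}].

Definition admissible_alpha (alpha : R -> R) (alpha0 : R) : Prop :=
  [/\ measurable_fun (`]0%R, +oo[ : set R) alpha,
      (forall T : R, 0 < T -> exists M : R,
         {ae lebesgue_measure, forall t, 0 < t < T -> `|alpha t| <= M}) &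
      {ae lebesgue_measure, forall t, 0 < t -> alpha0 <= alpha t}].

Definition Linf_vec (g : R -> vec) : Prop :=
  (forall i : 'I_d, measurable_fun (`]0%R, +oo[ : set R) (fun t => g t ord0 i)) /\
  exists M : R, {ae lebesgue_measure, forall t, 0 < t -> enorm (g t) <= M}.

Definition property_X (phi : vec -> \bar R) (D : R) : Prop :=
  forall (C : R), 0 < C -> forall zeta0, DC phi C zeta0 ->
  forall (alpha : R -> R) (alpha0 : R), 0 < alpha0 -> admissible_alpha alpha alpha0 ->
  forall (g : R -> vec), Linf_vec g ->
    {ae lebesgue_measure, forall t, 0 < t -> enorm (g t) <= C} ->
  forall zeta zeta', is_solution phi alpha g zeta0 zeta zeta' ->
    {ae lebesgue_measure, forall t, 0 < t -> enorm (g t - alpha t *: zeta' t) <= D * C}.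

Definition W1inf (zeta zeta' : R -> vec) : Prop :=
  W11loc zeta zeta' /\ exists M : R,
    (forall t, 0 <= t -> enorm (zeta t) <= M) /\
    {ae lebesgue_measure, forall t, 0 < t -> enorm (zeta' t) <= M}.

End Defs.

From HB Require Import structures.
From mathcomp Require Import all_boot all_order all_algebra.
From mathcomp Require Import all_classical all_reals all_analysis.
From mathcomp Require Import measurable_realfun ring lra.
Import Order.TTheory GRing.Theory Num.Theory.
Set Implicit Arguments. Unset Strict Implicit.
Local Open Scope classical_set_scope.
Local Open Scope ring_scope.

(* Write [w := zeta1 - zeta2] and [h := |1/alpha1 - 1/alpha2| + |g1 - g2|].
   Property (X) bounds the subgradients [xi_i := g_i - alpha_i zeta_i'] by [DC];
   with the monotonicity of the subdifferential this gives, for a.e. [t] and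
   every vector [v], [<v, w'(t)> <= L |v| h(t) + K |v - w(t)|].  Since [w] is
   Lipschitz, the choice [v := w(a)] integrated over [(a, b]] yields
   [|w b|^2 <= |w a|^2 + 2 |w a| L \int_a^b h + E (b - a)^2].  Chaining this over
   [n] equal steps of [[0, t]], the quadratic errors add up to [O(1/n)], whence
   [|w t| <= |w 0| + L \int_0^t h] without any chain rule for [|w|^2]. *)

Section Euclidean.
Variables (R : realType) (d : nat).
Implicit Types (x y z : 'rV[R]_d) (a : R).

Lemma vdotC x y : vdot x y = vdot y x.
Proof. by apply: eq_bigr => i _; rewrite mulrC. Qed.

Lemma vdotDr x y z : vdot x (y + z) = vdot x y + vdot x z.
Proof. by rewrite /vdot -big_split; apply: eq_bigr => i _; rewrite !mxE mulrDr. Qed.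

Lemma vdotNr x y : vdot x (- y) = - vdot x y.
Proof. by rewrite /vdot -sumrN; apply: eq_bigr => i _; rewrite !mxE mulrN. Qed.

Lemma vdotBr x y z : vdot x (y - z) = vdot x y - vdot x z.
Proof. by rewrite vdotDr vdotNr. Qed.

Lemma vdotZr x y a : vdot x (a *: y) = a * vdot x y.
Proof. by rewrite /vdot mulr_sumr; apply: eq_bigr => i _; rewrite !mxE mulrCA. Qed.

Lemma vdotDl x y z : vdot (x + y) z = vdot x z + vdot y z.
Proof. by rewrite vdotC vdotDr !(vdotC z). Qed.

Lemma vdotNl x y : vdot (- x) y = - vdot x y.
Proof. by rewrite vdotC vdotNr vdotC. Qed.

Lemma vdotBl x y z : vdot (x - y) z = vdot x z - vdot y z.
Proof. by rewrite vdotDl vdotNl. Qed.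

Lemma vdotZl x y a : vdot (a *: x) y = a * vdot x y.
Proof. by rewrite vdotC vdotZr vdotC. Qed.

Lemma vdotxx_ge0 x : 0 <= vdot x x.
Proof. by apply: sumr_ge0 => i _; rewrite -expr2 sqr_ge0. Qed.

Lemma enorm_ge0 x : 0 <= enorm x.
Proof. exact: sqrtr_ge0. Qed.

Lemma enorm_sqr x : enorm x ^+ 2 = vdot x x.
Proof. by rewrite sqr_sqrtr // vdotxx_ge0. Qed.

Lemma enormN x : enorm (- x) = enorm x.
Proof. by rewrite /enorm vdotNl vdotNr opprK. Qed.

Lemma enorm_eq0_vdot x y : enorm x = 0 -> vdot x y = 0.
Proof.
move=> /(congr1 (fun r => r ^+ 2)); rewrite enorm_sqr expr0n /= => x0.
have xi0 i : x ord0 i = 0.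
  have /psumr_eq0P/(_ i isT)/eqP : vdot x x = 0 := x0.
  by rewrite mulf_eq0 orbb => /(_ (fun j _ => ltac:(by rewrite -expr2 sqr_ge0)))/eqP.
by rewrite /vdot big1 // => i _; rewrite xi0 mul0r.
Qed.

Lemma vdot_le x y : vdot x y <= enorm x * enorm y.
Proof.
have [x0|x0] := eqVneq (enorm x) 0; first by rewrite enorm_eq0_vdot // x0 mul0r.
have [y0|y0] := eqVneq (enorm y) 0.
  by rewrite vdotC enorm_eq0_vdot // y0 mulr0.
have xy_gt0 : 0 < enorm x * enorm y.
  by rewrite mulr_gt0 // lt_def ?x0 ?y0 enorm_ge0.
(* [0 <= | |y| x - |x| y |^2] *)
have := vdotxx_ge0 (enorm y *: x - enorm x *: y).
rewrite !(vdotBl, vdotBr, vdotZl, vdotZr) -!enorm_sqr (vdotC y x) => h.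
have : 0 <= 2 * (enorm x * enorm y) * (enorm x * enorm y - vdot x y) by nra.
by rewrite pmulr_rge0 ?subr_ge0 // mulr_gt0.
Qed.

Lemma normr_vdot_le x y : `|vdot x y| <= enorm x * enorm y.
Proof.
rewrite ler_norml vdot_le andbT lerNl -vdotNl -(enormN x).
exact: vdot_le.
Qed.

Lemma scale_vdot_le a x y : a * vdot x y <= `|a| * (enorm x * enorm y).
Proof.
apply: le_trans (ler_norm _) _; rewrite normrM.
by apply: ler_wpM2l => //; exact: normr_vdot_le.
Qed.

Lemma enorm_sqrD x y : enorm (x + y) ^+ 2 = enorm x ^+ 2 + 2 * vdot x y + enorm y ^+ 2.
Proof. by rewrite !enorm_sqr !(vdotDl, vdotDr) (vdotC y x); ring. Qed.

Lemma enormD x y : enorm (x + y) <= enorm x + enorm y.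
Proof.
have : enorm (x + y) ^+ 2 <= (enorm x + enorm y) ^+ 2.
  by rewrite enorm_sqrD sqrrD; have := vdot_le x y; lra.
by rewrite ler_pXn2r // nnegrE ?addr_ge0 ?enorm_ge0.
Qed.

Lemma enormB x y : enorm (x - y) <= enorm x + enorm y.
Proof. by rewrite -(enormN y) enormD. Qed.

Lemma normr_coord_le x i : `|x ord0 i| <= enorm x.
Proof.
rewrite -(sqrtr_sqr (x ord0 i)) /enorm ler_sqrt ?vdotxx_ge0 //.
rewrite /vdot (bigD1 i) //= expr2 lerDl; apply: sumr_ge0 => j _.
by rewrite -expr2 sqr_ge0.
Qed.

Lemma enorm_le_sum x : enorm x <= \sum_i `|x ord0 i|.
Proof.
have s0 : 0 <= \sum_i `|x ord0 i| by apply: sumr_ge0.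
rewrite /enorm -(ger0_norm s0) -sqrtr_sqr ler_sqrt ?sqr_ge0 //.
rewrite /vdot expr2 mulr_suml; apply: ler_sum => i _.
apply: le_trans (ler_norm _) _; rewrite normrM ler_wpM2l //.
by rewrite (bigD1 i) //= lerDl sumr_ge0.
Qed.

End Euclidean.

Section Subdifferential.
Variables (R : realType) (d : nat) (phi : 'rV[R]_d -> \bar R).
Hypothesis phi_nm : never_minfty phi.
Implicit Types (x xi : 'rV[R]_d).

Lemma subdiff_finE x xi : subdiff phi x xi -> phi x = (fine (phi x))%:E.
Proof. by move=> [xfin _]; rewrite fineK // fin_numE phi_nm /= lt_eqF. Qed.

Lemma subdiff_monotone x1 x2 xi1 xi2 :
  subdiff phi x1 xi1 -> subdiff phi x2 xi2 -> 0 <= vdot (xi1 - xi2) (x1 - x2).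
Proof.
move=> s1 s2; have [_ h1] := s1; have [_ h2] := s2.
move: (h1 x2) (h2 x1); rewrite (subdiff_finE s1) (subdiff_finE s2) !lee_fin.
rewrite !(vdotBl, vdotBr) (vdotC xi1 x2) (vdotC xi2 x1) (vdotC xi1 x1) (vdotC xi2 x2).
lra.
Qed.

(* With [xi_i := g_i - al_i z_i] and [a_i := al_i^-1] one has
   [z1 - z2 = a1 (g1 - g2) + (a1 - a2) (g2 - xi2) - a1 (xi1 - xi2)]; pairing with
   [v] and splitting [v = (x1 - x2) + (v - (x1 - x2))] in the last term, the
   monotonicity of the subdifferential disposes of the [x1 - x2] part. *)
Lemma subdiff_flow_vdot_le (D C a0 al1 al2 : R) x1 x2 (g1 g2 z1 z2 v : 'rV[R]_d) :
  0 < a0 -> a0 <= al1 -> a0 <= al2 -> enorm g2 <= C ->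
  subdiff phi x1 (g1 - al1 *: z1) -> subdiff phi x2 (g2 - al2 *: z2) ->
  enorm (g1 - al1 *: z1) <= D * C -> enorm (g2 - al2 *: z2) <= D * C ->
  vdot v (z1 - z2) <=
    enorm v * ((a0^-1 + (D + 1) * C) * (`|al1^-1 - al2^-1| + enorm (g1 - g2)))
    + 2 * D * C / a0 * enorm (v - (x1 - x2)).
Proof.
move=> a0_gt0 al1_ge al2_ge g2C s1 s2.
have mono := subdiff_monotone s1 s2.
set xi1 := g1 - al1 *: z1 in s1 mono *; set xi2 := g2 - al2 *: z2 in s2 mono *.
move=> xi1DC xi2DC.
have zE (al : R) (g z : 'rV[R]_d) : a0 <= al -> z = al^-1 *: (g - (g - al *: z)).
  move=> al_ge; rewrite opprB addrC subrK scalerA mulVf ?scale1r //.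
  by rewrite gt_eqF // (lt_le_trans a0_gt0).
rewrite [z1](zE al1 g1 z1 al1_ge) [z2](zE al2 g2 z2 al2_ge) -/xi1 -/xi2.
clearbody xi1 xi2.
set a1 := al1^-1; set a2 := al2^-1; set w := x1 - x2.
have a1_gt0 : 0 < a1 by rewrite invr_gt0 (lt_le_trans a0_gt0).
have a1_le : a1 <= a0^-1 by rewrite lef_pV2 // posrE (lt_le_trans a0_gt0).
have -> : vdot v (a1 *: (g1 - xi1) - a2 *: (g2 - xi2)) =
    a1 * vdot v (g1 - g2) + (a1 - a2) * vdot v (g2 - xi2)
    - a1 * vdot (xi1 - xi2) w - a1 * vdot (v - w) (xi1 - xi2).
  rewrite [vdot (xi1 - xi2) w]vdotC !(vdotBl, vdotBr, vdotZr); ring.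
set nv := enorm v; set ng := enorm (g1 - g2); set nvw := enorm (v - w).
set e := `|a1 - a2|.
have DC_ge0 : 0 <= D * C := le_trans (enorm_ge0 _) xi1DC.
have C_ge0 : 0 <= C := le_trans (enorm_ge0 _) g2C.
have T1 : a1 * vdot v (g1 - g2) <= a0^-1 * (nv * ng).
  apply: le_trans (scale_vdot_le _ _ _) _; rewrite gtr0_norm //.
  by apply: ler_wpM2r => //; rewrite mulr_ge0 ?enorm_ge0.
have T2 : (a1 - a2) * vdot v (g2 - xi2) <= e * (nv * ((D + 1) * C)).
  apply: le_trans (scale_vdot_le _ _ _) _; apply: ler_wpM2l => //.
  apply: ler_wpM2l; first exact: enorm_ge0.
  by apply: le_trans (enormB _ _) _; rewrite mulrDl mul1r addrC lerD.
have T3 : 0 <= a1 * vdot (xi1 - xi2) w by rewrite mulr_ge0 // ltW.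
have T4 : - (a1 * vdot (v - w) (xi1 - xi2)) <= a0^-1 * (nvw * (2 * (D * C))).
  rewrite -mulNr; apply: le_trans (scale_vdot_le _ _ _) _.
  rewrite normrN gtr0_norm //; apply: ler_pM => //; first exact: ltW.
    by rewrite mulr_ge0 ?enorm_ge0.
  apply: ler_wpM2l; first exact: enorm_ge0.
  by apply: le_trans (enormB _ _) _; rewrite mulr2n mulrDl mul1r lerD.
have R1 : 0 <= nv * (a0^-1 * e) + nv * ((D + 1) * C * ng).
  have D1C_ge0 : 0 <= (D + 1) * C by rewrite mulrDl mul1r addr_ge0.
  have [nv0 ng0] : 0 <= nv /\ 0 <= ng by rewrite !enorm_ge0.
  have a0V_ge0 : 0 <= a0^-1 by rewrite invr_ge0 ltW.
  have e0 : 0 <= e := normr_ge0 _.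
  by rewrite addr_ge0 // mulr_ge0 // mulr_ge0.
have -> : nv * ((a0^-1 + (D + 1) * C) * (e + ng)) =
    a0^-1 * (nv * ng) + e * (nv * ((D + 1) * C))
    + (nv * (a0^-1 * e) + nv * ((D + 1) * C * ng)) by ring.
have -> : 2 * D * C / a0 * nvw = a0^-1 * (nvw * (2 * (D * C))) by ring.
lra.
Qed.

End Subdifferential.

Section Integration.
Variable R : realType.
Local Notation mu := (@lebesgue_measure R).
Implicit Types (D : set R) (a b : R).

Lemma ae_mono (P Q : R -> Prop) : (forall x, P x -> Q x) ->
  {ae mu, forall x, P x} -> {ae mu, forall x, Q x}.
Proof. exact: (filterS (Filter := ae_filter_ringOfSetsType mu)). Qed.

Lemma ae_and (P Q : R -> Prop) : {ae mu, forall x, P x} -> {ae mu, forall x, Q x} ->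
  {ae mu, forall x, P x /\ Q x}.
Proof. by apply: (filterS2 (ae_filter_ringOfSetsType mu)) => x. Qed.

Lemma ae_le_Rintegral D (f1 f2 : R -> R) : measurable D ->
  mu.-integrable D (EFin \o f1) -> mu.-integrable D (EFin \o f2) ->
  {ae mu, forall x, D x -> f1 x <= f2 x} ->
  Rintegral mu D f1 <= Rintegral mu D f2.
Proof.
move=> mD i1 i2 [N [mN N0 sub]].
rewrite /Rintegral (negligible_integral mN mD i1 N0).
rewrite (negligible_integral mN mD i2 N0).
have mDN : measurable (D `\` N) by exact: measurableD.
apply: le_Rintegral => //.
- by apply: integrableS i1 => //; exact: subDsetl.
- by apply: integrableS i2 => //; exact: subDsetl.
move=> x [Dx Nx]; apply: contrapT => h; apply: Nx; apply: sub => /= hh.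
exact/h/hh.
Qed.

Lemma Rintegral_sum (I : Type) (s : seq I) D (F : I -> R -> R) : measurable D ->
  (forall i, mu.-integrable D (EFin \o F i)) ->
  Rintegral mu D (fun x => \sum_(i <- s) F i x) = \sum_(i <- s) Rintegral mu D (F i).
Proof.
move=> mD iF; elim: s => [|i s IH].
  rewrite big_nil (_ : (fun x => _) = cst 0); last by apply/funext => x; rewrite big_nil.
  by rewrite Rintegral_cst // mul0r.
rewrite big_cons -IH -RintegralD //; last first.
  apply: (@eq_integrable _ _ _ mu D mD (fun x => \sum_(j <- s) (F j x)%:E)).
    by move=> x _; rewrite /= sumEFin.
  by apply: integrable_sum => // j _; exact: iF.
by apply: eq_Rintegral => x _; rewrite big_cons.
Qed.

Lemma lebesgue_itv_oc_lty a b : (mu `]a, b] < +oo)%E.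
Proof. by rewrite lebesgue_measure_itv /=; case: ifP => // _; rewrite -EFinD ltry. Qed.

Lemma ae_bounded_integrable D (f : R -> R) (M : R) : measurable D ->
  (mu D < +oo)%E -> measurable_fun D f ->
  {ae mu, forall x, D x -> `|f x| <= M} -> mu.-integrable D (EFin \o f).
Proof.
move=> mD Dfin mf fM; apply/integrableP; split; first exact/measurable_EFinP.
apply: (@le_lt_trans _ _ (`|M|%:E * mu D)%E); last by rewrite lte_mul_pinfty.
apply: integral_le_bound => //; first exact/measurable_EFinP.
apply: ae_mono fM => x fxM Dx; by rewrite lee_fin (le_trans (fxM Dx)) // ler_norm.
Qed.

Lemma Rintegral_cst_itv_oc a b c : a <= b -> Rintegral mu `]a, b] (fun=> c) = c * (b - a).
Proof.
move=> ab; rewrite Rintegral_cst //.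
have := lebesgue_measure_itv `]a, b]; rewrite /= => ->; rewrite lte_fin.
by case: ltgtP ab => // -> _; rewrite subrr mulr0.
Qed.

Lemma integral_itv_cc_Rintegral a b (f : R -> R) :
  mu.-integrable `]a, b] (EFin \o f) ->
  (\int[mu]_(x in `[a, b]) (f x)%:E)%E = (Rintegral mu `]a, b] f)%:E.
Proof.
move=> fint; rewrite -integral_itv_obnd_cbnd; last first.
  by case/integrableP: fint.
by rewrite /Rintegral fineK // (integrable_fin_num _ fint).
Qed.

Lemma integrable_cst_itv_oc a b c : mu.-integrable `]a, b] (EFin \o fun=> c).
Proof.
apply: (@ae_bounded_integrable _ _ `|c|) => //; first exact: lebesgue_itv_oc_lty.
exact: aeW.
Qed.

Lemma measurable_inv : measurable_fun [set: R] (@GRing.inv R).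
Proof.
rewrite -(setUv [set 0%R]) setUC; apply/measurable_funU => //; first exact: measurableC.
split; last exact: measurable_fun_set1.
apply: open_continuous_measurable_fun.
  by apply: closed_openC; apply: compact_closed; [exact: Rhausdorff|exact: compact_set1].
by move=> x; rewrite inE /= => x0; apply: inv_continuous; exact/eqP.
Qed.

Lemma measurable_enorm (d : nat) D (f : R -> 'rV[R]_d) :
  (forall i, measurable_fun D (fun t => f t ord0 i)) ->
  measurable_fun D (fun t => enorm (f t)).
Proof.
move=> mf; rewrite (_ : (fun t => _) =
  Num.sqrt \o (fun t => \sum_i f t ord0 i * f t ord0 i)) //.
apply: measurableT_comp.
  by apply: continuous_measurable_fun; exact: sqrt_continuous.
by apply: measurable_sum => i; exact: measurable_funM.
Qed.

End Integration.

Section Sobolev.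
Variables (R : realType) (d : nat).
Local Notation mu := (@lebesgue_measure R).
Local Notation vec := 'rV[R]_d.

Lemma W11loc_integrable_cc (z z' : R -> vec) i t : W11loc z z' -> 0 <= t ->
  mu.-integrable `[0, t] (EFin \o (fun s => z' s ord0 i)).
Proof.
move=> zW t0; have [iz _] := zW i.
apply: integrableS (iz (t + 1) _) => //; last by rewrite ltr_wpDl.
by apply: subset_itv; rewrite bnd_simp // lerDl.
Qed.

Lemma W11loc_sub (z1 z1' z2 z2' : R -> vec) : W11loc z1 z1' -> W11loc z2 z2' ->
  W11loc (fun t => z1 t - z2 t) (fun t => z1' t - z2' t).
Proof.
move=> W1 W2 i; have [i1 e1] := W1 i; have [i2 e2] := W2 i.
split=> [T T0 | t t0].
  apply: (eq_integrable _ _ _ _ (integrableB _ (i1 _ T0) (i2 _ T0))) => // s _.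
  by rewrite /= !mxE.
rewrite /= !mxE e1 // e2 //.
rewrite (_ : (fun s => (z1' s - z2' s) ord0 i) = fun s => z1' s ord0 i - z2' s ord0 i); last first.
  by apply/funext => s; rewrite !mxE.
rewrite (@RintegralB _ _ _ mu _ (fun s => z1' s ord0 i) (fun s => z2' s ord0 i)) //.
- by rewrite opprD addrACA.
- exact: W11loc_integrable_cc.
- exact: W11loc_integrable_cc.
Qed.

Variables (z z' : R -> vec).
Hypothesis zW : W11loc z z'.

Lemma W11loc_integrable i a b : 0 <= a -> a <= b ->
  mu.-integrable `]a, b] (EFin \o (fun s => z' s ord0 i)).
Proof.
move=> a0 ab; apply: integrableS (W11loc_integrable_cc i zW (le_trans a0 ab)) => //.
by apply: subset_itv; rewrite bnd_simp.
Qed.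

Lemma W11loc_incr i a b : 0 <= a -> a <= b ->
  z b ord0 i - z a ord0 i = Rintegral mu `]a, b] (fun s => z' s ord0 i).
Proof.
move=> a0 ab; have [_ ez] := zW i.
rewrite (ez b) ?(le_trans a0 ab) // (ez a) // opprD addrACA subrr add0r.
apply: Rintegral_itvB; rewrite ?bnd_simp //.
exact: W11loc_integrable_cc (le_trans a0 ab).
Qed.

Lemma W11loc_vdot_integrable v a b : 0 <= a -> a <= b ->
  mu.-integrable `]a, b] (EFin \o (fun s => vdot v (z' s))).
Proof.
move=> a0 ab; apply: (@eq_integrable _ _ _ mu `]a, b] _
  (fun s => \sum_(i <- index_enum 'I_d) ((v ord0 i)%:E * (z' s ord0 i)%:E)%E)) => //.
  by move=> s _; rewrite /= /vdot sumEFin.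
apply: integrable_sum => // i _.
exact: integrableZl (W11loc_integrable i a0 ab).
Qed.

Lemma W11loc_vdot_incr v a b : 0 <= a -> a <= b ->
  vdot v (z b - z a) = Rintegral mu `]a, b] (fun s => vdot v (z' s)).
Proof.
move=> a0 ab; rewrite /vdot Rintegral_sum //; last first.
  by move=> i; exact: integrableZl (W11loc_integrable i a0 ab).
apply: eq_bigr => i _; rewrite RintegralZl ?W11loc_integrable //.
by rewrite -W11loc_incr // !mxE.
Qed.

Lemma W11loc_lipschitz M a b : {ae mu, forall t, 0 < t -> enorm (z' t) <= M} ->
  0 <= a -> a <= b -> enorm (z b - z a) <= d%:R * M * (b - a).
Proof.
move=> z'M a0 ab; apply: le_trans (enorm_le_sum _) _.
rewrite -mulrA mulr_natl -[in X in _ <= X](card_ord d) -sumr_const.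
apply: ler_sum => i _.
rewrite !mxE W11loc_incr //; apply: le_trans (le_normr_Rintegral _ _) _ => //.
  exact: W11loc_integrable.
rewrite -(Rintegral_cst_itv_oc M ab); apply: ae_le_Rintegral => //.
- exact: integrable_norm (W11loc_integrable i a0 ab).
- exact: integrable_cst_itv_oc.
apply: ae_mono z'M => t tM; rewrite /= in_itv /= => /andP[a_lt_t _].
by apply: le_trans (tM (le_lt_trans a0 a_lt_t)); exact: normr_coord_le.
Qed.

End Sobolev.

Section SquareSteps.
Variables (R : realType) (u G : R -> R) (E : R).
Hypotheses (u_ge0 : forall s, 0 <= u s) (E_ge0 : 0 <= E).
Hypothesis G_nondecreasing : forall a b, 0 <= a -> a <= b -> G a <= G b.
Hypothesis u_sqr_step : forall a b, 0 <= a -> a < b ->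
  u b ^+ 2 <= u a ^+ 2 + 2 * u a * (G b - G a) + E * (b - a) ^+ 2.

(* One step costs [c := E h^2 / (2 eps)]: [(P + c)^2 >= P^2 + E h^2] whenever [P >= eps]. *)
Lemma sqr_steps_le (h eps : R) : 0 < h -> 0 < eps -> forall k : nat,
  u (k%:R * h) <= u 0 + eps + (G (k%:R * h) - G 0) + k%:R * (E * h ^+ 2 / (2 * eps)).
Proof.
move=> h_gt0 eps_gt0; set c := E * h ^+ 2 / (2 * eps).
have c_ge0 : 0 <= c by rewrite divr_ge0 ?mulr_ge0 ?sqr_ge0 // ltW.
have cE : E * h ^+ 2 = 2 * eps * c by rewrite /c; field; rewrite gt_eqF.
elim=> [|k IH]; first by rewrite !mul0r subrr !addr0 lerDl ltW.
set a := k%:R * h.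
have a_ge0 : 0 <= a by rewrite mulr_ge0 // ltW.
have a_lt : a < a + h by rewrite ltrDl.
have ub_sqr := u_sqr_step a_ge0 a_lt.
rewrite (addrAC a) subrr add0r in ub_sqr.
rewrite -natr1 mulrDl mul1r -/a.
set P := u 0 + eps + (G a - G 0) + k%:R * c; set dG := G (a + h) - G a.
have P_ge_eps : eps <= P.
  have : 0 <= G a - G 0 by rewrite subr_ge0 G_nondecreasing.
  have := u_ge0 0; have : 0 <= k%:R * c by rewrite mulr_ge0.
  rewrite /P; lra.
have dG_ge0 : 0 <= dG by rewrite subr_ge0 G_nondecreasing // ltW.
have -> : u 0 + eps + (G (a + h) - G 0) + (k%:R + 1) * c = P + dG + c.
  by rewrite /P /dG; ring.
rewrite -(@ler_pXn2r _ 2) ?nnegrE ?u_ge0 //; last first.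
  lra.
apply: le_trans ub_sqr _; rewrite -/dG.
have ua_sqr : u a ^+ 2 <= P ^+ 2 by rewrite ler_pXn2r ?nnegrE ?u_ge0 ?(le_trans (u_ge0 a) IH).
have : u a * dG <= P * dG by rewrite ler_wpM2r.
have : eps * c <= P * c by rewrite ler_wpM2r.
have := sqr_ge0 (dG + c); rewrite cE; nra.
Qed.

Lemma le_of_sqr_steps t : 0 < t -> u t <= u 0 + (G t - G 0).
Proof.
move=> t_gt0; apply/ler_addgt0Pr => e e_gt0.
set eps := e / 2; have eps_gt0 : 0 < eps by rewrite divr_gt0.
set n := (Num.truncn (E * t ^+ 2 / (2 * eps ^+ 2))).+1.
have n_gt0 : 0 < n%:R :> R by rewrite ltr0n.
have := sqr_steps_le (divr_gt0 t_gt0 n_gt0) eps_gt0 n.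
rewrite mulrC divfK ?gt_eqF //.
have -> : n%:R * (E * (t / n%:R) ^+ 2 / (2 * eps)) = E * t ^+ 2 / (2 * eps * n%:R).
  by field; rewrite !gt_eqF.
have : E * t ^+ 2 / (2 * eps * n%:R) <= eps.
  have := Num.Theory.truncnS_gt (E * t ^+ 2 / (2 * eps ^+ 2)).
  rewrite -/n ltr_pdivrMr ?mulr_gt0 ?exprn_gt0 // => En.
  rewrite ler_pdivrMr ?mulr_gt0 //.
  by rewrite (_ : eps * (2 * eps * n%:R) = n%:R * (2 * eps ^+ 2)) ?ltW //; ring.
rewrite /eps; lra.
Qed.

End SquareSteps.

Section EnergyEstimate.
Variables (R : realType) (d : nat) (w w' : R -> 'rV[R]_d) (h : R -> R) (K M : R).
Local Notation mu := (@lebesgue_measure R).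
Hypotheses (wW : W11loc w w') (K_ge0 : 0 <= K) (M_ge0 : 0 <= M).
Hypothesis w'_bounded : {ae mu, forall t, 0 < t -> enorm (w' t) <= M}.
Hypothesis w'_vdot_le : {ae mu, forall t, 0 < t -> forall v,
  vdot v (w' t) <= enorm v * h t + K * enorm (v - w t)}.
Hypotheses (h_ge0 : forall t, 0 <= h t)
  (h_integrable : forall b, mu.-integrable `]0, b] (EFin \o h)).

Let H b := Rintegral mu `]0, b] h.

Let h_integrable_oc a b : 0 <= a -> mu.-integrable `]a, b] (EFin \o h).
Proof.
by move=> a0; apply: integrableS (h_integrable b) => //; apply: subset_itv; rewrite bnd_simp.
Qed.

Let H_incr a b : 0 <= a -> a <= b -> H b - H a = Rintegral mu `]a, b] h.
Proof. by move=> a0 ab; apply: Rintegral_itvB; rewrite ?bnd_simp. Qed.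

Lemma enorm_sqr_step a b : 0 <= a -> a < b ->
  enorm (w b) ^+ 2 <= enorm (w a) ^+ 2 + 2 * enorm (w a) * (H b - H a)
    + (2 * K * (d%:R * M) + (d%:R * M) ^+ 2) * (b - a) ^+ 2.
Proof.
move=> a0 ab.
have lip s : a <= s -> enorm (w s - w a) <= d%:R * M * (s - a).
  exact: W11loc_lipschitz wW _ _ _ w'_bounded a0.
set L := d%:R * M in lip *; have L_ge0 : 0 <= L by rewrite mulr_ge0.
have dot : vdot (w a) (w b - w a) <=
    enorm (w a) * (H b - H a) + K * (L * (b - a)) * (b - a).
  rewrite (W11loc_vdot_incr wW _ a0 (ltW ab)) (H_incr a0 (ltW ab)).
  rewrite -(Rintegral_cst_itv_oc (K * (L * (b - a))) (ltW ab)) -RintegralZl //; last first.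
    exact: h_integrable_oc.
  rewrite -RintegralD //; last 2 first.
  - exact: integrableZl (h_integrable_oc _ a0).
  - exact: integrable_cst_itv_oc.
  apply: ae_le_Rintegral => //.
  - exact: (W11loc_vdot_integrable wW) (ltW ab).
  - apply: (@integrableD _ _ _ mu _ _ (EFin \o fun s => enorm (w a) * h s)
      (EFin \o fun=> K * (L * (b - a)))) => //.
      exact: integrableZl (h_integrable_oc _ a0).
    exact: integrable_cst_itv_oc.
  apply: ae_mono w'_vdot_le => s dot_le; rewrite /= in_itv /= => /andP[a_lt_s s_le_b].
  apply: le_trans (dot_le (le_lt_trans a0 a_lt_s) (w a)) _; apply: lerD => //.
  apply: ler_wpM2l => //; rewrite -enormN opprB.
  apply: le_trans (lip s (ltW a_lt_s)) _; apply: ler_wpM2l => //.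
  by rewrite lerD2r.
have sq : enorm (w b - w a) ^+ 2 <= (L * (b - a)) ^+ 2.
  have Lba_ge0 : 0 <= L * (b - a) by rewrite mulr_ge0 // subr_ge0 ltW.
  by rewrite ler_pXn2r ?nnegrE ?enorm_ge0 // lip // ltW.
rewrite -[w b](addrNK (w a)) addrC enorm_sqrD -/L.
have -> : (2 * K * L + L ^+ 2) * (b - a) ^+ 2 =
  2 * (K * (L * (b - a)) * (b - a)) + (L * (b - a)) ^+ 2 by ring.
lra.
Qed.

Lemma enorm_le_Rintegral t : 0 < t -> enorm (w t) <= enorm (w 0) + H t.
Proof.
move=> t_gt0.
have H0 : H 0 = 0 by rewrite /H set_itv_ge ?Rintegral_set0 // bnd_simp ltxx.
have := le_of_sqr_steps _ _ _ (enorm_sqr_step) t_gt0; rewrite H0 subr0; apply.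
- by move=> s; exact: enorm_ge0.
- by rewrite addr_ge0 ?sqr_ge0 // !mulr_ge0.
- by move=> a b a0 ab; rewrite -subr_ge0 H_incr // Rintegral_ge0.
Qed.

End EnergyEstimate.

Section Stability.
Variables (R : realType) (d : nat) (phi : 'rV[R]_d -> \bar R) (D C a0 : R).
Local Notation mu := (@lebesgue_measure R).
Hypotheses (phi_nm : never_minfty phi) (PX : property_X phi D).
Hypotheses (D_gt0 : 0 < D) (C_gt0 : 0 < C) (a0_gt0 : 0 < a0).
Variables (alpha1 alpha2 : R -> R) (g1 g2 : R -> 'rV[R]_d) (z01 z02 : 'rV[R]_d)
  (z1 z1' z2 z2' : R -> 'rV[R]_d).
Hypotheses (z01C : DC phi C z01) (z02C : DC phi C z02).
Hypotheses (alpha1_adm : admissible_alpha alpha1 a0) (alpha2_adm : admissible_alpha alpha2 a0).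
Hypotheses (g1_Linf : Linf_vec g1) (g2_Linf : Linf_vec g2).
Hypothesis g1C : {ae mu, forall t, 0 < t -> enorm (g1 t) <= C}.
Hypothesis g2C : {ae mu, forall t, 0 < t -> enorm (g2 t) <= C}.
Hypotheses (z1_sol : is_solution phi alpha1 g1 z01 z1 z1')
  (z2_sol : is_solution phi alpha2 g2 z02 z2 z2').

Let h t := `|(alpha1 t)^-1 - (alpha2 t)^-1| + enorm (g1 t - g2 t).
Let L := a0^-1 + (D + 1) * C.

Lemma solutions_vdot_le : {ae mu, forall t, 0 < t -> forall v,
  vdot v (z1' t - z2' t) <= enorm v * (L * h t) + 2 * D * C / a0 * enorm (v - (z1 t - z2 t))}.
Proof.
have X1 := PX C_gt0 z01C a0_gt0 alpha1_adm g1_Linf g1C z1_sol.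
have X2 := PX C_gt0 z02C a0_gt0 alpha2_adm g2_Linf g2C z2_sol.
case: z1_sol => _ _ s1; case: z2_sol => _ _ s2.
case: alpha1_adm => _ _ a1; case: alpha2_adm => _ _ a2.
apply: ae_mono (ae_and X1 (ae_and X2 (ae_and s1 (ae_and s2 (ae_and a1 (ae_and a2 g2C))))));
move=> t [x1 [x2 [t1 [t2 [b1 [b2 c2]]]]]] t_gt0 v.
exact: subdiff_flow_vdot_le (b1 t_gt0) (b2 t_gt0) (c2 t_gt0) (t1 t_gt0) (t2 t_gt0)
  (x1 t_gt0) (x2 t_gt0).
Qed.

Let measurable_h : measurable_fun (`]0, +oo[ : set R) h.
Proof.
case: alpha1_adm => m1 _ _; case: alpha2_adm => m2 _ _.
case: g1_Linf => mg1 _; case: g2_Linf => mg2 _.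
apply: measurable_funD.
  apply: measurableT_comp; first exact: normr_measurable.
  by apply: measurable_funB; apply: measurableT_comp => //; exact: measurable_inv.
apply: measurable_enorm => i.
rewrite (_ : (fun t => _) = fun t => g1 t ord0 i - g2 t ord0 i).
  exact: measurable_funB.
by apply/funext => t; rewrite !mxE.
Qed.

Lemma solutions_h_integrable b : mu.-integrable `]0, b] (EFin \o h).
Proof.
apply: (@ae_bounded_integrable _ _ _ (2 * a0^-1 + 2 * C)) => //.
- exact: lebesgue_itv_oc_lty.
- by apply: measurable_funS measurable_h => //; apply: subset_itv; rewrite bnd_simp.
case: alpha1_adm => _ _ a1; case: alpha2_adm => _ _ a2.
apply: ae_mono (ae_and a1 (ae_and a2 (ae_and g1C g2C))) => t [a1t [a2t [g1t g2t]]].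
rewrite /= in_itv /= => /andP[t_gt0 _].
have inv_le (al : R) : a0 <= al -> `|al^-1| <= a0^-1.
  move=> al_ge; have al_gt0 := lt_le_trans a0_gt0 al_ge.
  by rewrite gtr0_norm ?invr_gt0 // lef_pV2.
rewrite ger0_norm ?addr_ge0 ?enorm_ge0 //.
have := inv_le _ (a1t t_gt0); have := inv_le _ (a2t t_gt0).
have := ler_normB (alpha1 t)^-1 (alpha2 t)^-1; have := enormB (g1 t) (g2 t).
have := g1t t_gt0; have := g2t t_gt0.
rewrite /h; lra.
Qed.

Lemma solutions_estimate t : W1inf z1 z1' -> W1inf z2 z2' -> 0 < t ->
  enorm (z1 t - z2 t) <= enorm (z01 - z02) + L * Rintegral mu `]0, t] h.
Proof.
move=> [_ [M1 [_ z1'M]]] [_ [M2 [_ z2'M]]] t_gt0.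
have [z1W z10 _] := z1_sol; have [z2W z20 _] := z2_sol.
have L_ge0 : 0 <= L.
  apply: addr_ge0; first by rewrite invr_ge0 ltW.
  by apply: mulr_ge0; [apply: addr_ge0 | ]; rewrite // ltW.
have w'M : {ae mu, forall t, 0 < t -> enorm (z1' t - z2' t) <= `|M1| + `|M2|}.
  apply: ae_mono (ae_and z1'M z2'M) => s [s1 s2] s_gt0.
  apply: le_trans (enormB _ _) _.
  by apply: lerD; apply: le_trans (ler_norm _); [exact: s1 | exact: s2].
rewrite -RintegralZl //; last exact: solutions_h_integrable.
rewrite -z10 -z20.
apply: (enorm_le_Rintegral (W11loc_sub z1W z2W) _ _ w'M solutions_vdot_le) => //.
- by rewrite !mulr_ge0 ?invr_ge0 // ltW.
- by move=> s; rewrite mulr_ge0 // addr_ge0 ?enorm_ge0.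
- by move=> b; exact: integrableZl (solutions_h_integrable b).
Qed.

End Stability.

Theorem proposition3p4 (R : realType) (d : nat) (phi : 'rV[R]_d -> \bar R) (D : R) :
  proper_fun phi -> convex_fun phi -> lsc_fun phi -> 0 < D -> property_X phi D ->
  forall (C alpha0 : R), 0 < C -> 0 < alpha0 ->
  exists L : R,
  forall (alpha1 alpha2 : R -> R) (g1 g2 : R -> 'rV[R]_d)
         (zeta01 zeta02 : 'rV[R]_d) (zeta1 zeta1' zeta2 zeta2' : R -> 'rV[R]_d),
    DC phi C zeta01 -> DC phi C zeta02 ->
    admissible_alpha alpha1 alpha0 -> admissible_alpha alpha2 alpha0 ->
    Linf_vec g1 -> Linf_vec g2 ->
    {ae lebesgue_measure, forall t, 0 < t -> enorm (g1 t) <= C} ->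
    {ae lebesgue_measure, forall t, 0 < t -> enorm (g2 t) <= C} ->
    W1inf zeta1 zeta1' -> W1inf zeta2 zeta2' ->
    is_solution phi alpha1 g1 zeta01 zeta1 zeta1' ->
    is_solution phi alpha2 g2 zeta02 zeta2 zeta2' ->
    forall t : R, 0 < t ->
      ((enorm (zeta1 t - zeta2 t))%:E <=
       (enorm (zeta01 - zeta02))%:E +
       L%:E * \int[lebesgue_measure]_(tau in (`[0%R, t] : set R))
                 (`|(alpha1 tau)^-1 - (alpha2 tau)^-1| + enorm (g1 tau - g2 tau))%:E)%E.
Proof.
move=> [phi_nm _] _ _ D_gt0 PX C a0 C_gt0 a0_gt0; exists (a0^-1 + (D + 1) * C).
move=> alpha1 alpha2 g1 g2 z01 z02 z1 z1' z2 z2' z01C z02C alpha1_adm alpha2_adm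
  g1_Linf g2_Linf g1C g2C z1_W1inf z2_W1inf z1_sol z2_sol t t_gt0.
have h_int := solutions_h_integrable a0_gt0 alpha1_adm alpha2_adm g1_Linf g2_Linf g1C g2C.
rewrite integral_itv_cc_Rintegral ?h_int // -EFinM -EFinD lee_fin.
exact: (solutions_estimate phi_nm PX D_gt0 C_gt0 a0_gt0 z01C z02C alpha1_adm alpha2_adm
  g1_Linf g2_Linf g1C g2C z1_sol z2_sol z1_W1inf z2_W1inf).
Qed.
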